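(* Let $p,q\ge 2$ be integers with $q\equiv \pm 1\pmod p$. Then $$\sum_{\substack{n=1\\ p\nmid n,\ q\nmid n}}^{pq-1}\frac{\cot(\pi n/p)\cot(\pi n/q)}{\sin^2(\pi n/(pq))}=\begin{cases}\dfrac{1}{45p}(p^2-1)(p^2-4)(q-1)^2(q+2), & q\equiv 1\pmod p,\\[2mm] \dfrac{1}{45p}(p^2-1)(p^2-4)(q+1)^2(q-2), & q\equiv -1\pmod p.\end{cases}$$ *)

From Stdlib Require Import Reals Lra Lia Arith.
Open Scope R_scope.

(* cotangent, defined as cos/sin (only evaluated at points where sin <> 0) *)
Definition cot (x : R) : R := cos x / sin x.

Fixpoint sum_filter (P : nat -> bool) (f : nat -> R) (b : nat) : R :=
  match b with
  | O => if P O then f O else 0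
  | S k => sum_filter P f k + (if P (S k) then f (S k) else 0)
  end.

Definition term (p q n : nat) : R :=
  cot (PI * INR n / INR p) * cot (PI * INR n / INR q)
  / (sin (PI * INR n / INR (p * q)) ^ 2).

Definition admissible (p q n : nat) : bool :=
  (1 <=? n)%nat && negb (n mod p =? 0)%nat && negb (n mod q =? 0)%nat.

Definition the_sum (p q : nat) : R :=
  sum_filter (admissible p q) (term p q) (p * q - 1).

From Stdlib Require Import Reals Arith ZArith Lia Lra.
Open Scope R_scope.

(* With N = pq, the finite Fourier expansions
     cot (pi n / m) = - (2/m) sum_{j<m} j sin (2 pi j n / m)              (m does not divide n),
     1 / sin^2 (pi n / N) = - (2/N) sum_{j<N} j (N - j) cos (2 pi j n / N)   (N does not divide n)
   turn the summand into a triple sum of products sin * sin * cos.  Summing over n first,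
   orthogonality modulo N leaves only congruence conditions, and the whole sum becomes
     - (4/N) sum_{x<p} sum_{y<q} x y (B (xq - yp) - B (xq + yp)),   B M = r (N - r), r = M mod N.
   When q = kp + eps with eps = 1 or -1, the residues of xq - yp and xq + yp are explicit on two
   ranges of y each, so the inner sum is the polynomial k^2 p q (q + 2 eps) / 3 * x (x - p) (2x - p),
   and the outer sum is a sum of powers. *)

Fixpoint sumR (n : nat) (f : nat -> R) : R :=
  match n with O => 0 | S k => sumR k f + f k end.

Lemma sumR_ext n f g : (forall i, (i < n)%nat -> f i = g i) -> sumR n f = sumR n g.
Proof.
  induction n as [|n IH]; intros H; simpl; [reflexivity|].
  rewrite IH, H by (try intros; try apply H; lia); reflexivity.
Qed.

Lemma sumR_add n f g : sumR n (fun i => f i + g i) = sumR n f + sumR n g.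
Proof. induction n as [|n IH]; simpl; [lra|]. rewrite IH; lra. Qed.

Lemma sumR_sub n f g : sumR n (fun i => f i - g i) = sumR n f - sumR n g.
Proof. induction n as [|n IH]; simpl; [lra|]. rewrite IH; lra. Qed.

Lemma sumR_scal n c f : sumR n (fun i => c * f i) = c * sumR n f.
Proof. induction n as [|n IH]; simpl; [lra|]. rewrite IH; lra. Qed.

Lemma sumR_mul_r n f c : sumR n f * c = sumR n (fun i => f i * c).
Proof. induction n as [|n IH]; simpl; [lra|]. rewrite <- IH; lra. Qed.

Lemma sumR_eq0 n f : (forall i, (i < n)%nat -> f i = 0) -> sumR n f = 0.
Proof.
  induction n as [|n IH]; intros H; simpl; [reflexivity|].
  rewrite IH, H by (try intros; try apply H; lia); lra.
Qed.

Lemma sumR_const n c : sumR n (fun _ => c) = INR n * c.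
Proof. induction n as [|n IH]; cbn [sumR]; [simpl; ring|]. rewrite IH, S_INR; ring. Qed.

Lemma sumR_swap n m f :
  sumR n (fun i => sumR m (fun j => f i j)) = sumR m (fun j => sumR n (fun i => f i j)).
Proof.
  induction n as [|n IH]; simpl.
  - symmetry; apply sumR_eq0; reflexivity.
  - rewrite IH, <- sumR_add; reflexivity.
Qed.

Lemma sumR_mul n m f g :
  sumR n f * sumR m g = sumR n (fun i => sumR m (fun j => f i * g j)).
Proof.
  induction n as [|n IH]; simpl; [lra|].
  rewrite <- IH, Rmult_plus_distr_r, <- (sumR_scal m (f n)); reflexivity.
Qed.

Lemma sumR_single n j0 f : (j0 < n)%nat ->
  (forall j, (j < n)%nat -> j <> j0 -> f j = 0) -> sumR n f = f j0.
Proof.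
  induction n as [|n IH]; intros Hj0 H0; [lia|]. simpl.
  destruct (Nat.eq_dec j0 n) as [->|Hne].
  - rewrite sumR_eq0 by (intros; apply H0; lia); lra.
  - rewrite IH, (H0 n) by (try intros; try apply H0; lia); lra.
Qed.

Lemma sumR_split n m f A B : (m <= n)%nat ->
  (forall j, (j < m)%nat -> f j = A j) -> (forall j, (m <= j < n)%nat -> f j = B j) ->
  sumR n f = sumR m A + (sumR n B - sumR m B).
Proof.
  intros Hmn HA HB. induction n as [|n IH].
  - replace m with O by lia; simpl; lra.
  - destruct (Nat.eq_dec m (S n)) as [->|Hne]; simpl.
    + rewrite (sumR_ext n f A) by (intros; apply HA; lia).
      rewrite HA by lia; lra.
    + rewrite IH by (try intros; try apply HB; lia).
      rewrite HB by lia; lra.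
Qed.

Lemma sumR_by_parts c f g h n : (forall j, c * f j = g (S j) - g j) ->
  c * sumR n (fun j => h j * f j)
  = h n * g n - h O * g O - sumR n (fun j => (h (S j) - h j) * g (S j)).
Proof.
  intros Hg. induction n as [|n IH]; simpl; [ring|].
  rewrite Rmult_plus_distr_l, IH.
  replace (c * (h n * f n)) with (h n * (c * f n)) by ring. rewrite Hg; ring.
Qed.

Lemma sumR_telescope c f g n : (forall j, c * f j = g (S j) - g j) ->
  c * sumR n f = g n - g O.
Proof.
  intros Hg. induction n as [|n IH]; simpl; [ring|].
  rewrite Rmult_plus_distr_l, IH, Hg; ring.
Qed.

Lemma sum_filter_sumR P f n :
  sum_filter P f n = sumR (S n) (fun i => if P i then f i else 0).
Proof. induction n as [|n IH]; simpl; [lra|]. rewrite IH; reflexivity. Qed.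

Lemma sumR_id_pow1 m : sumR m (fun j => INR j) = INR m * (INR m - 1) / 2.
Proof. induction m as [|m IH]; cbn [sumR]; [simpl; field|]. rewrite IH, S_INR; field. Qed.

Lemma sumR_id_pow2 m : sumR m (fun j => INR j ^ 2) = INR m * (INR m - 1) * (2 * INR m - 1) / 6.
Proof. induction m as [|m IH]; cbn [sumR]; [simpl; field|]. rewrite IH, S_INR; field. Qed.

Lemma sumR_id_pow3 m : sumR m (fun j => INR j ^ 3) = (INR m * (INR m - 1) / 2) ^ 2.
Proof. induction m as [|m IH]; cbn [sumR]; [simpl; field|]. rewrite IH, S_INR; field. Qed.

Lemma sumR_id_pow4 m : sumR m (fun j => INR j ^ 4)
  = INR m * (INR m - 1) * (2 * INR m - 1) * (3 * INR m ^ 2 - 3 * INR m - 1) / 30.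
Proof. induction m as [|m IH]; cbn [sumR]; [simpl; field|]. rewrite IH, S_INR; field. Qed.

Lemma sumR_id_mul_affine2 m A B C D :
  sumR m (fun j => INR j * (A + B * INR j) * (C + D * INR j))
  = A * C * (INR m * (INR m - 1) / 2)
    + (A * D + B * C) * (INR m * (INR m - 1) * (2 * INR m - 1) / 6)
    + B * D * (INR m * (INR m - 1) / 2) ^ 2.
Proof.
  rewrite (sumR_ext m _ (fun j => A * C * INR j + ((A * D + B * C) * INR j ^ 2 + B * D * INR j ^ 3)))
    by (intros; ring).
  rewrite !sumR_add, !sumR_scal.
  rewrite sumR_id_pow1, sumR_id_pow2, sumR_id_pow3; ring.
Qed.

Lemma two_sin_mul_cos phi t : 2 * sin phi * cos t = sin (t + phi) - sin (t - phi).
Proof. rewrite sin_plus, sin_minus; ring. Qed.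

Lemma two_sin_mul_sin phi t : 2 * sin phi * sin t = cos (t - phi) - cos (t + phi).
Proof. rewrite cos_plus, cos_minus; ring. Qed.

(* Multiplied by [2 * sin phi], each sum below telescopes (after summation by parts for the
   weighted ones); [sin (N * phi) = 0] makes [2 N phi] a period of the boundary terms. *)
Section GridSums.
Variables (phi : R) (N : nat).
Hypothesis sin_phi_neq0 : sin phi <> 0.
Hypothesis sin_N_phi : sin (INR N * phi) = 0.

Let two_sin_neq0 : 2 * sin phi <> 0.
Proof. intros H; apply sin_phi_neq0; lra. Qed.

Let angle_S j a : 2 * INR (S j) * phi + (a - phi) = 2 * INR j * phi + a + phi.
Proof. rewrite S_INR; ring. Qed.

Let angle_0 a : 2 * INR 0 * phi + a = a.
Proof. simpl; ring. Qed.

Lemma sin_2N_phi_add b : sin (2 * INR N * phi + b) = sin b.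
Proof.
  replace (2 * INR N * phi) with (2 * (INR N * phi)) by ring.
  rewrite sin_plus, sin_2a, cos_2a_sin, sin_N_phi; ring.
Qed.

Lemma cos_2N_phi_add b : cos (2 * INR N * phi + b) = cos b.
Proof.
  replace (2 * INR N * phi) with (2 * (INR N * phi)) by ring.
  rewrite cos_plus, sin_2a, cos_2a_sin, sin_N_phi; ring.
Qed.

Lemma sum_cos_grid a : sumR N (fun j => cos (2 * INR j * phi + a)) = 0.
Proof.
  apply (Rmult_eq_reg_l (2 * sin phi)); [|exact two_sin_neq0]. rewrite Rmult_0_r.
  rewrite (sumR_telescope _ _ (fun j => sin (2 * INR j * phi + (a - phi)))).
  - rewrite sin_2N_phi_add, angle_0; ring.
  - intros j; rewrite two_sin_mul_cos, angle_S; f_equal; f_equal; ring.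
Qed.

Lemma sum_sin_grid a : sumR N (fun j => sin (2 * INR j * phi + a)) = 0.
Proof.
  apply (Rmult_eq_reg_l (2 * sin phi)); [|exact two_sin_neq0]. rewrite Rmult_0_r.
  rewrite (sumR_telescope _ _ (fun j => - cos (2 * INR j * phi + (a - phi)))).
  - rewrite cos_2N_phi_add, angle_0; ring.
  - intros j; rewrite two_sin_mul_sin, angle_S.
    replace (2 * INR j * phi + a - phi) with (2 * INR j * phi + (a - phi)) by ring; ring.
Qed.

Lemma sum_id_sin_grid a :
  sumR N (fun j => INR j * sin (2 * INR j * phi + a)) = - INR N * cos (a - phi) / (2 * sin phi).
Proof.
  apply (Rmult_eq_reg_l (2 * sin phi)); [|exact two_sin_neq0].
  rewrite (sumR_by_parts _ _ (fun j => - cos (2 * INR j * phi + (a - phi)))).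
  - rewrite (sumR_ext _ _ (fun j => -1 * cos (2 * INR j * phi + (a + phi)))).
    + rewrite sumR_scal, sum_cos_grid, cos_2N_phi_add; simpl; field; exact sin_phi_neq0.
    + intros j _; rewrite angle_S, S_INR.
      replace (2 * INR j * phi + a + phi) with (2 * INR j * phi + (a + phi)) by ring; ring.
  - intros j; rewrite two_sin_mul_sin, angle_S.
    replace (2 * INR j * phi + a - phi) with (2 * INR j * phi + (a - phi)) by ring; ring.
Qed.

Lemma sum_parabola_cos_grid :
  sumR N (fun j => INR j * (INR N - INR j) * cos (2 * INR j * phi))
  = - INR N / (2 * sin phi ^ 2).
Proof.
  rewrite (sumR_ext _ _ (fun j => INR j * (INR N - INR j) * cos (2 * INR j * phi + 0)))
    by (intros; rewrite Rplus_0_r; reflexivity).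
  apply (Rmult_eq_reg_l (2 * sin phi)); [|exact two_sin_neq0].
  rewrite (sumR_by_parts _ _ (fun j => sin (2 * INR j * phi + (0 - phi)))).
  - rewrite (sumR_ext _ _ (fun j => (INR N - 1) * sin (2 * INR j * phi + phi)
                                    - 2 * (INR j * sin (2 * INR j * phi + phi)))).
    + rewrite sumR_sub, !sumR_scal, sum_sin_grid, sum_id_sin_grid.
      replace (phi - phi) with 0 by ring. rewrite cos_0; simpl; field; exact sin_phi_neq0.
    + intros j _; rewrite angle_S, S_INR.
      replace (2 * INR j * phi + 0 + phi) with (2 * INR j * phi + phi) by ring; ring.
  - intros j; rewrite two_sin_mul_cos, angle_S.
    replace (2 * INR j * phi + 0 - phi) with (2 * INR j * phi + (0 - phi)) by ring; ring.
Qed.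
End GridSums.

Definition dvd_ind (N : nat) (M : Z) : R := if (M mod Z.of_nat N =? 0)%Z then 1 else 0.

Definition grid_angle (N n : nat) (M : Z) : R := 2 * INR n * (PI * IZR M / INR N).

Lemma INR_neq0 n : (0 < n)%nat -> INR n <> 0.
Proof. intros; apply not_0_INR; lia. Qed.

Lemma sin_PI_IZR z : sin (PI * IZR z) = 0.
Proof. apply sin_eq_0_1; exists z; ring. Qed.

Lemma sin_PI_frac_eq0 (M : Z) N : (0 < N)%nat ->
  sin (PI * IZR M / INR N) = 0 -> (M mod Z.of_nat N = 0)%Z.
Proof.
  intros HN Hsin. apply sin_eq_0_0 in Hsin as [c Hc].
  assert (HM : IZR M = IZR (c * Z.of_nat N)).
  { rewrite mult_IZR, <- INR_IZR_INZ.
    replace (IZR M) with (PI * IZR M / INR N * INR N / PI)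
      by (field; split; [apply INR_neq0; assumption | apply PI_neq0]).
    rewrite Hc; field; apply PI_neq0. }
  apply eq_IZR in HM as ->; apply Z.mod_mul; lia.
Qed.

Lemma sin_PI_frac_mul_dvd (M : Z) N j : (0 < N)%nat -> (M mod Z.of_nat N = 0)%Z ->
  sin (INR j * (PI * IZR M / INR N)) = 0.
Proof.
  intros HN HM. apply Z.mod_divide in HM as [c ->]; [|lia].
  replace (INR j * (PI * IZR (c * Z.of_nat N) / INR N)) with (PI * IZR (Z.of_nat j * c)).
  - apply sin_PI_IZR.
  - rewrite !mult_IZR, <- !INR_IZR_INZ; field; apply INR_neq0; lia.
Qed.

Lemma sin_grid_period (M : Z) N : (0 < N)%nat -> sin (INR N * (PI * IZR M / INR N)) = 0.
Proof.
  intros HN. replace (INR N * (PI * IZR M / INR N)) with (PI * IZR M).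
  - apply sin_PI_IZR.
  - field; apply INR_neq0; lia.
Qed.

Lemma sum_cos_orthogonality N (M : Z) : (0 < N)%nat ->
  sumR N (fun n => cos (grid_angle N n M)) = INR N * dvd_ind N M.
Proof.
  intros HN. unfold dvd_ind, grid_angle. destruct (Z.eqb_spec (M mod Z.of_nat N) 0) as [HM|HM].
  - rewrite (sumR_ext _ _ (fun _ => 1)).
    + rewrite sumR_const; ring.
    + intros n _. rewrite Rmult_assoc, cos_2a_sin, sin_PI_frac_mul_dvd by assumption; ring.
  - rewrite (sumR_ext _ _ (fun n => cos (2 * INR n * (PI * IZR M / INR N) + 0)))
      by (intros; rewrite Rplus_0_r; reflexivity).
    rewrite sum_cos_grid; [ring| |apply sin_grid_period; assumption].
    intros Hsin; apply HM, sin_PI_frac_eq0; assumption.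
Qed.

Definition cot_sum (m n : nat) : R :=
  - (2 / INR m) * sumR m (fun j => INR j * sin (2 * INR j * (PI * INR n / INR m))).

Definition csc2_sum (m n : nat) : R :=
  - (2 / INR m) * sumR m (fun j => INR j * (INR m - INR j) * cos (2 * INR j * (PI * INR n / INR m))).

Lemma sin_PI_frac_neq0 m n : (0 < m)%nat -> (n mod m <> 0)%nat -> sin (PI * INR n / INR m) <> 0.
Proof.
  intros Hm Hn Hsin. apply Hn, Nat2Z.inj. rewrite Nat2Z.inj_mod.
  apply sin_PI_frac_eq0; [assumption|]. rewrite <- INR_IZR_INZ; exact Hsin.
Qed.

Lemma cot_sum_cot m n : (0 < m)%nat -> (n mod m <> 0)%nat -> cot_sum m n = cot (PI * INR n / INR m).
Proof.
  intros Hm Hn. unfold cot_sum.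
  rewrite (sumR_ext _ _ (fun j => INR j * sin (2 * INR j * (PI * INR n / INR m) + 0)))
    by (intros; rewrite Rplus_0_r; reflexivity).
  rewrite sum_id_sin_grid.
  - unfold cot. rewrite Rminus_0_l, cos_neg. field.
    split; [apply sin_PI_frac_neq0 | apply INR_neq0]; assumption.
  - apply sin_PI_frac_neq0; assumption.
  - rewrite (INR_IZR_INZ n); apply sin_grid_period; assumption.
Qed.

Lemma cot_sum_dvd m n : (0 < m)%nat -> (n mod m = 0)%nat -> cot_sum m n = 0.
Proof.
  intros Hm Hn. unfold cot_sum. rewrite sumR_eq0; [ring|]. intros j _.
  replace (2 * INR j) with (INR (2 * j)) by (rewrite mult_INR; reflexivity).
  rewrite (INR_IZR_INZ n), sin_PI_frac_mul_dvd; [ring|assumption|].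
  rewrite <- Nat2Z.inj_mod, Hn; reflexivity.
Qed.

Lemma csc2_sum_csc2 m n : (0 < m)%nat -> (n mod m <> 0)%nat ->
  csc2_sum m n = / sin (PI * INR n / INR m) ^ 2.
Proof.
  intros Hm Hn. unfold csc2_sum. rewrite sum_parabola_cos_grid.
  - field. split; [apply sin_PI_frac_neq0 | apply INR_neq0]; assumption.
  - apply sin_PI_frac_neq0; assumption.
  - rewrite (INR_IZR_INZ n); apply sin_grid_period; assumption.
Qed.

Lemma the_sum_fourier p q : (0 < p)%nat -> (0 < q)%nat ->
  the_sum p q = sumR (p * q) (fun n => cot_sum p n * cot_sum q n * csc2_sum (p * q) n).
Proof.
  intros Hp Hq. unfold the_sum. rewrite sum_filter_sumR.
  replace (S (p * q - 1)) with (p * q)%nat by nia.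
  apply sumR_ext; intros n Hn. unfold admissible.
  destruct (Nat.eqb_spec (n mod p) 0) as [Hnp|Hnp].
  { rewrite cot_sum_dvd by assumption. rewrite Bool.andb_false_r; simpl; ring. }
  destruct (Nat.eqb_spec (n mod q) 0) as [Hnq|Hnq].
  { rewrite (cot_sum_dvd q) by assumption. rewrite Bool.andb_false_r; simpl; ring. }
  assert (Hn0 : (1 <= n)%nat) by (destruct n; [rewrite Nat.Div0.mod_0_l in Hnp by lia|]; lia).
  assert (HnN : (n mod (p * q) <> 0)%nat) by (rewrite Nat.mod_small; lia).
  apply Nat.leb_le in Hn0. rewrite Hn0; simpl.
  unfold term. rewrite !cot_sum_cot, csc2_sum_csc2 by (try assumption; lia). unfold Rdiv; ring.
Qed.

Lemma sin_sin_cos a b c :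
  sin a * sin b * cos c
  = / 4 * (cos (a - b + c) + cos (- (a - b) + c) - cos (a + b + c) - cos (- (a + b) + c)).
Proof.
  repeat rewrite ?cos_plus, ?cos_minus, ?sin_plus, ?sin_minus, ?cos_neg, ?sin_neg; field.
Qed.

Lemma sum_sin_sin_cos_grid N (A B C : Z) : (0 < N)%nat ->
  sumR N (fun n => sin (grid_angle N n A) * sin (grid_angle N n B) * cos (grid_angle N n C))
  = INR N / 4 * (dvd_ind N (A - B + C) + dvd_ind N (- (A - B) + C)
                 - dvd_ind N (A + B + C) - dvd_ind N (- (A + B) + C)).
Proof.
  intros HN.
  rewrite (sumR_ext _ _ (fun n => / 4 *
      (cos (grid_angle N n (A - B + C)) + cos (grid_angle N n (- (A - B) + C))
       - cos (grid_angle N n (A + B + C)) - cos (grid_angle N n (- (A + B) + C))))).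
  - rewrite sumR_scal, !sumR_sub, sumR_add, !sum_cos_orthogonality by assumption; field.
  - intros n _. set (t := 2 * INR n * (PI / INR N)).
    assert (Ht : forall M, grid_angle N n M = t * IZR M)
      by (intros; unfold grid_angle, t, Rdiv; ring).
    rewrite !Ht, sin_sin_cos, !plus_IZR, !minus_IZR, !opp_IZR, !plus_IZR, !minus_IZR.
    rewrite !Rmult_plus_distr_l, !Rmult_minus_distr_l, !Ropp_mult_distr_r_reverse,
      !Rmult_plus_distr_l, !Rmult_minus_distr_l.
    reflexivity.
Qed.

Lemma sumR_mul3_exchange N a b c f g h :
  sumR N (fun n => sumR a (f n) * sumR b (g n) * sumR c (h n))
  = sumR a (fun i => sumR b (fun j => sumR c (fun k => sumR N (fun n => f n i * g n j * h n k)))).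
Proof.
  rewrite (sumR_ext _ _ (fun n => sumR a (fun i => sumR b (fun j => sumR c (fun k => f n i * g n j * h n k))))).
  2:{ intros n _. rewrite (sumR_mul a b), sumR_mul_r. apply sumR_ext; intros i _.
      rewrite sumR_mul_r. apply sumR_ext; intros j _. symmetry; apply sumR_scal. }
  rewrite sumR_swap. apply sumR_ext; intros i _.
  rewrite sumR_swap. apply sumR_ext; intros j _.
  apply sumR_swap.
Qed.

Definition mod_parabola (N : nat) (M : Z) : R :=
  IZR (M mod Z.of_nat N) * (INR N - IZR (M mod Z.of_nat N)).

Lemma mod_parabola_opp N M : (0 < N)%nat -> mod_parabola N (- M) = mod_parabola N M.
Proof.
  intros HN. unfold mod_parabola.
  destruct (Z.eq_dec (M mod Z.of_nat N) 0) as [H0|H0].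
  - rewrite Z.mod_opp_l_z, H0 by lia; simpl; ring.
  - rewrite Z.mod_opp_l_nz, minus_IZR, <- INR_IZR_INZ by lia; ring.
Qed.

Lemma mod_parabola_small N M : (0 <= M < Z.of_nat N)%Z ->
  mod_parabola N M = IZR M * (INR N - IZR M).
Proof. intros HM. unfold mod_parabola. rewrite Z.mod_small by assumption; reflexivity. Qed.

Lemma mod_parabola_nonpos N M : (- Z.of_nat N < M <= 0)%Z ->
  mod_parabola N M = - IZR M * (INR N + IZR M).
Proof.
  intros HM. rewrite <- mod_parabola_opp, mod_parabola_small by lia.
  rewrite opp_IZR; ring.
Qed.

Lemma mod_parabola_big N M : (Z.of_nat N <= M < 2 * Z.of_nat N)%Z ->
  mod_parabola N M = (IZR M - INR N) * (2 * INR N - IZR M).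
Proof.
  intros HM. unfold mod_parabola.
  replace M with (M - Z.of_nat N + 1 * Z.of_nat N)%Z at 1 2 by ring.
  rewrite Z.mod_add, Z.mod_small by lia.
  rewrite minus_IZR, <- INR_IZR_INZ; ring.
Qed.

Lemma sum_parabola_dvd_ind N M : (0 < N)%nat ->
  sumR N (fun j => INR j * (INR N - INR j) * dvd_ind N (M + Z.of_nat j)) = mod_parabola N M.
Proof.
  intros HN. set (r := ((- M) mod Z.of_nat N)%Z).
  assert (Hr : (0 <= r < Z.of_nat N)%Z) by (apply Z.mod_pos_bound; lia).
  assert (HMr : ((M + r) mod Z.of_nat N = 0)%Z).
  { unfold r. rewrite Z.add_mod_idemp_r by lia. rewrite Z.add_opp_diag_r; reflexivity. }
  assert (Hdvd : forall j, (j < N)%nat ->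
            ((M + Z.of_nat j) mod Z.of_nat N = 0)%Z -> Z.of_nat j = r).
  { intros j Hj Hj0. apply Z.mod_divide in Hj0 as [c Hc]; [|lia].
    apply Z.mod_divide in HMr as [d Hd]; [|lia].
    assert (c = d) by nia. subst; lia. }
  rewrite (sumR_single N (Z.to_nat r)).
  - unfold dvd_ind. rewrite Z2Nat.id, HMr by lia. simpl.
    rewrite <- mod_parabola_opp by assumption. unfold mod_parabola. fold r.
    rewrite INR_IZR_INZ, Z2Nat.id by lia; ring.
  - lia.
  - intros j Hj Hne. unfold dvd_ind.
    destruct (Z.eqb_spec ((M + Z.of_nat j) mod Z.of_nat N) 0) as [H|_]; [|ring].
    exfalso; apply Hne. apply Hdvd in H; lia.
Qed.

Lemma sum_sin_sin_parabola_cos N (A B : Z) : (0 < N)%nat ->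
  sumR N (fun z => sumR N (fun n => sin (grid_angle N n A) * sin (grid_angle N n B)
                                     * (INR z * (INR N - INR z) * cos (grid_angle N n (Z.of_nat z)))))
  = INR N / 2 * (mod_parabola N (A - B) - mod_parabola N (A + B)).
Proof.
  intros HN.
  rewrite (sumR_ext N _ (fun z => INR N / 4 *
      (INR z * (INR N - INR z) * dvd_ind N (A - B + Z.of_nat z)
       + INR z * (INR N - INR z) * dvd_ind N (- (A - B) + Z.of_nat z)
       - INR z * (INR N - INR z) * dvd_ind N (A + B + Z.of_nat z)
       - INR z * (INR N - INR z) * dvd_ind N (- (A + B) + Z.of_nat z)))).
  - rewrite sumR_scal, !sumR_sub, sumR_add, !sum_parabola_dvd_ind, !mod_parabola_opp by assumption.
    field.
  - intros z _.
    rewrite (sumR_ext N _ (fun n => INR z * (INR N - INR z) *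
        (sin (grid_angle N n A) * sin (grid_angle N n B) * cos (grid_angle N n (Z.of_nat z)))))
      by (intros; ring).
    rewrite sumR_scal, sum_sin_sin_cos_grid by assumption; ring.
Qed.

Lemma grid_angle_transpose j n m :
  2 * INR j * (PI * INR n / INR m) = grid_angle m n (Z.of_nat j).
Proof. unfold grid_angle. rewrite <- INR_IZR_INZ; unfold Rdiv; ring. Qed.

Lemma grid_angle_refine j n m r N : (m * r = N)%nat -> (0 < N)%nat ->
  2 * INR j * (PI * INR n / INR m) = grid_angle N n (Z.of_nat j * Z.of_nat r).
Proof.
  intros <- HN. unfold grid_angle. rewrite mult_IZR, <- !INR_IZR_INZ, mult_INR.
  field; split; apply INR_neq0; nia.
Qed.

Lemma the_sum_mod_parabola p q : (0 < p)%nat -> (0 < q)%nat ->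
  the_sum p q = - (4 / INR (p * q)) * sumR p (fun x => INR x * sumR q (fun y => INR y *
     (mod_parabola (p * q) (Z.of_nat x * Z.of_nat q - Z.of_nat y * Z.of_nat p)
      - mod_parabola (p * q) (Z.of_nat x * Z.of_nat q + Z.of_nat y * Z.of_nat p)))).
Proof.
  intros Hp Hq. rewrite the_sum_fourier by assumption.
  set (N := (p * q)%nat). assert (HN : (0 < N)%nat) by (unfold N; nia).
  rewrite (sumR_ext _ _ (fun n => (- (2 / INR p)) * (- (2 / INR q)) * (- (2 / INR N)) *
      (sumR p (fun x => INR x * sin (grid_angle N n (Z.of_nat x * Z.of_nat q)))
       * sumR q (fun y => INR y * sin (grid_angle N n (Z.of_nat y * Z.of_nat p)))
       * sumR N (fun z => INR z * (INR N - INR z) * cos (grid_angle N n (Z.of_nat z)))))).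
  2:{ intros n _. unfold cot_sum, csc2_sum.
      rewrite (sumR_ext p _ (fun x => INR x * sin (grid_angle N n (Z.of_nat x * Z.of_nat q))))
        by (intros; rewrite (grid_angle_refine _ _ p q N); reflexivity || assumption).
      rewrite (sumR_ext q _ (fun y => INR y * sin (grid_angle N n (Z.of_nat y * Z.of_nat p))))
        by (intros; rewrite (grid_angle_refine _ _ q p N); [reflexivity|unfold N; ring|assumption]).
      rewrite (sumR_ext N _ (fun z => INR z * (INR N - INR z) * cos (grid_angle N n (Z.of_nat z))))
        by (intros; rewrite grid_angle_transpose; reflexivity).
      ring. }
  rewrite sumR_scal, sumR_mul3_exchange.
  rewrite (sumR_ext p _ (fun x => INR N / 2 * (INR x * sumR q (fun y => INR y *
     (mod_parabola N (Z.of_nat x * Z.of_nat q - Z.of_nat y * Z.of_nat p)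
      - mod_parabola N (Z.of_nat x * Z.of_nat q + Z.of_nat y * Z.of_nat p)))))).
  - rewrite sumR_scal. replace (INR N) with (INR p * INR q) by (symmetry; apply mult_INR).
    field; split; apply INR_neq0; assumption.
  - intros x _. rewrite <- !sumR_scal. apply sumR_ext; intros y _.
    rewrite (sumR_ext N _ (fun z => INR x * INR y * sumR N (fun n =>
        sin (grid_angle N n (Z.of_nat x * Z.of_nat q)) * sin (grid_angle N n (Z.of_nat y * Z.of_nat p))
        * (INR z * (INR N - INR z) * cos (grid_angle N n (Z.of_nat z))))))
      by (intros; rewrite <- sumR_scal; apply sumR_ext; intros; ring).
    rewrite sumR_scal, sum_sin_sin_parabola_cos by assumption; ring.
Qed.

Lemma sumR_sqr_mul_sub_mul_twice_sub m :
  sumR m (fun x => INR x ^ 2 * (INR x - INR m) * (2 * INR x - INR m))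
  = - INR m * (INR m ^ 2 - 1) * (INR m ^ 2 - 4) / 60.
Proof.
  rewrite (sumR_ext _ _ (fun x => 2 * INR x ^ 4 + (- 3 * INR m * INR x ^ 3 + INR m ^ 2 * INR x ^ 2)))
    by (intros; ring).
  rewrite !sumR_add, !sumR_scal, sumR_id_pow2, sumR_id_pow3, sumR_id_pow4; field.
Qed.

Section Evaluation.
Variables p q k e : nat.
Hypothesis p_ge2 : (2 <= p)%nat.
Hypothesis k_ge1 : (1 <= k)%nat.
Hypothesis e_le1 : (e <= 1)%nat.
Hypothesis q_eq : (q + 1 = k * p + 2 * e)%nat.

Let N := (p * q)%nat.
(* [q = k p + eps] with [eps = 2 e - 1], i.e. [eps = 1] or [eps = -1]. *)
Let eps := 2 * INR e - 1.

Let INR_q : INR q = INR k * INR p + eps.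
Proof.
  unfold eps. apply (Rplus_eq_reg_r 1). rewrite <- S_INR, <- Nat.add_1_r, q_eq.
  rewrite plus_INR, !mult_INR; simpl; ring.
Qed.

Let INR_N : INR N = INR p * INR q.
Proof. apply mult_INR. Qed.

Let IZR_xq_sub_yp x y :
  IZR (Z.of_nat x * Z.of_nat q - Z.of_nat y * Z.of_nat p) = INR x * INR q - INR y * INR p.
Proof. rewrite minus_IZR, !mult_IZR, <- !INR_IZR_INZ; reflexivity. Qed.

Let IZR_xq_add_yp x y :
  IZR (Z.of_nat x * Z.of_nat q + Z.of_nat y * Z.of_nat p) = INR x * INR q + INR y * INR p.
Proof. rewrite plus_IZR, !mult_IZR, <- !INR_IZR_INZ; reflexivity. Qed.

Lemma sum_mod_parabola_diff x : (1 <= x < p)%nat ->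
  sumR q (fun y => INR y * (mod_parabola N (Z.of_nat x * Z.of_nat q - Z.of_nat y * Z.of_nat p)
                            - mod_parabola N (Z.of_nat x * Z.of_nat q + Z.of_nat y * Z.of_nat p)))
  = INR k ^ 2 * INR p * INR q * (INR q + 2 * eps) / 3
    * (INR x * (INR x - INR p) * (2 * INR x - INR p)).
Proof.
  intros Hx. set (X := INR x). set (P := INR p). set (Q := INR q).
  rewrite (sumR_ext _ _ (fun y =>
      INR y * mod_parabola N (Z.of_nat x * Z.of_nat q - Z.of_nat y * Z.of_nat p)
      - INR y * mod_parabola N (Z.of_nat x * Z.of_nat q + Z.of_nat y * Z.of_nat p)))
    by (intros; ring).
  rewrite sumR_sub.
  (* [xq - yp] lies in [0, N) for [y < xk + e] and in (-N, 0] beyond; [xq + yp] lies in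
     [0, N) for [y < k (p - x) + e] and in [N, 2N) beyond. *)
  rewrite (sumR_split q (x * k + e) _
             (fun y => INR y * (X * Q + - P * INR y) * (P * Q - X * Q + P * INR y))
             (fun y => INR y * (- (X * Q) + P * INR y) * (P * Q + X * Q + - P * INR y))).
  2: nia.
  2:{ intros y Hy. rewrite mod_parabola_small, IZR_xq_sub_yp, INR_N by (unfold N; nia).
      unfold X, P, Q; ring. }
  2:{ intros y Hy. rewrite mod_parabola_nonpos, IZR_xq_sub_yp, INR_N by (unfold N; nia).
      unfold X, P, Q; ring. }
  rewrite (sumR_split q (k * (p - x) + e)
             (fun y => INR y * mod_parabola N (Z.of_nat x * Z.of_nat q + Z.of_nat y * Z.of_nat p))
             (fun y => INR y * (X * Q + P * INR y) * (P * Q - X * Q + - P * INR y))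
             (fun y => INR y * (X * Q - P * Q + P * INR y) * (2 * (P * Q) - X * Q + - P * INR y))).
  2: nia.
  2:{ intros y Hy. rewrite mod_parabola_small, IZR_xq_add_yp, INR_N by (unfold N; nia).
      unfold X, P, Q; ring. }
  2:{ intros y Hy. rewrite mod_parabola_big, IZR_xq_add_yp, INR_N by (unfold N; nia).
      unfold X, P, Q; ring. }
  rewrite !sumR_id_mul_affine2.
  replace (INR (x * k + e)) with (X * INR k + INR e) by (rewrite plus_INR, mult_INR; reflexivity).
  replace (INR (k * (p - x) + e)) with (INR k * (P - X) + INR e)
    by (rewrite plus_INR, mult_INR, minus_INR by lia; reflexivity).
  unfold X, P, Q. rewrite INR_q. unfold eps.
  destruct e as [|[|e']]; [| |lia]; simpl; field.
Qed.

Lemma the_sum_closed_form :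
  the_sum p q = / (45 * INR p) * (INR p ^ 2 - 1) * (INR p ^ 2 - 4)
                * (INR q - eps) ^ 2 * (INR q + 2 * eps).
Proof.
  assert (Hp : INR p <> 0) by (apply INR_neq0; lia).
  assert (Hq : INR q <> 0) by (apply INR_neq0; nia).
  rewrite the_sum_mod_parabola by nia.
  rewrite (sumR_ext p _ (fun x => INR k ^ 2 * INR p * INR q * (INR q + 2 * eps) / 3
                                   * (INR x ^ 2 * (INR x - INR p) * (2 * INR x - INR p)))).
  - rewrite sumR_scal, sumR_sqr_mul_sub_mul_twice_sub, mult_INR.
    replace (INR q - eps) with (INR k * INR p) by (rewrite INR_q; ring).
    field; split; assumption.
  - intros [|x] Hx; [simpl; ring|].
    transitivity (INR (S x) * (INR k ^ 2 * INR p * INR q * (INR q + 2 * eps) / 3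
                   * (INR (S x) * (INR (S x) - INR p) * (2 * INR (S x) - INR p)))).
    + f_equal; apply sum_mod_parabola_diff; lia.
    + ring.
Qed.
End Evaluation.

Theorem mainTheorem12 (p q : nat) (hp : (2 <= p)%nat) (hq : (2 <= q)%nat) :
  ((q mod p = 1 mod p)%nat ->
     the_sum p q = / (45 * INR p) * (INR p ^ 2 - 1) * (INR p ^ 2 - 4)
                   * (INR q - 1) ^ 2 * (INR q + 2)) /\
  (((q + 1) mod p = 0)%nat ->
     the_sum p q = / (45 * INR p) * (INR p ^ 2 - 1) * (INR p ^ 2 - 4)
                   * (INR q + 1) ^ 2 * (INR q - 2)).
Proof.
  split; intros Hmod.
  - rewrite (Nat.mod_small 1 p) in Hmod by lia.
    pose proof (Nat.div_mod q p) as Hdiv.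
    rewrite (the_sum_closed_form p q (q / p) 1) by nia.
    replace (2 * INR 1 - 1) with 1 by (simpl; ring); ring.
  - pose proof (Nat.div_mod (q + 1) p) as Hdiv.
    rewrite (the_sum_closed_form p q ((q + 1) / p) 0) by nia.
    replace (2 * INR 0 - 1) with (-1) by (simpl; ring); ring.
Qed.
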